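(* Let $W_\Gamma$ be a graph product on a finite graph $\Gamma=(V,E)$ with every vertex group primary or infinite cyclic. Then for every $\sim_\tau$-equivalence class $M\subset V$ that is minimal with respect to $\le_\tau$, the set $M\cup L_M$ is a lower cone with respect to $\le_\tau$. Moreover, if every $G_v$ is finite, then $L_M$ is a lower cone with respect to $\le_\tau$ for every subset $M\subset V$.
   Context: Graph: $\Gamma=(V,E)$, $V$ non-empty finite, $E$ a set of 2-element subsets; $lk(v)=\{x:\{v,x\}\in E\}$, $st(v)=lk(v)\cup\{v\}$. A group is primary if cyclic of order $p^k$, $p$ prime, $k\ge1$. Relation $\le_\tau$ on $V$: $v\le_\tau v$; for $v\neq w$, $v\le_\tau w$ iff either (a) $|G_v|=\infty$ and $lk(v)\subset st(w)$, or (b) $|G_v|=p^k$, $|G_w|=p^\ell$ for the same prime $p$ and $st(v)\subset st(w)$. This is a preorder; $v\sim_\tau w$ iff $v\le_\tau w$ and $w\le_\tau v$; minimality of classes refers to the induced partial order on classes. $X\subset V$ is a lower cone if $t\in X$, $s\in V$, $s\le_\tau t$ imply $s\in X$. For $M\subset V$, $L_M=V\setminus\bigcup_{w\in M}st(w)$ (the vertices adjacent to no vertex of $M$ and not in $M$). *)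

From mathcomp Require Import all_boot.
Set Implicit Arguments. Unset Strict Implicit. Unset Printing Implicit Defensive.

(* Vertex groups are encoded by their order  o : V -> nat,
   with  o v = 0  meaning G_v is infinite (cyclic) and  o v = n > 0  meaning
   |G_v| = n.  Only the orders enter the definition of <=_tau. *)

Definition simple_graph (V : finType) (e : rel V) : Prop :=
  symmetric e /\ irreflexive e.

Definition primary_order (n : nat) : Prop :=
  exists p k, prime p /\ (1 <= k)%N /\ n = (p ^ k)%N.

Definition vertex_orders_ok (V : finType) (o : V -> nat) : Prop :=
  forall v, o v = 0%N \/ primary_order (o v).

Section Graph.
Variables (V : finType) (e : rel V) (o : V -> nat).

Definition lk (v : V) : {set V} := [set x | e v x].
Definition st (v : V) : {set V} := v |: lk v.

Definition le_tau (v w : V) : Prop :=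
  v = w \/
  (v <> w /\
   ((o v = 0%N /\ lk v \subset st w) \/
    ((exists p k l, [/\ prime p, (1 <= k)%N, (1 <= l)%N,
                        o v = (p ^ k)%N & o w = (p ^ l)%N])
     /\ st v \subset st w))).

Definition equiv_tau (v w : V) : Prop := le_tau v w /\ le_tau w v.

Definition minimal_class (M : {set V}) : Prop :=
  exists v, (forall w, w \in M <-> equiv_tau v w) /\
            (forall u, le_tau u v -> le_tau v u).

Definition lower_cone (X : {set V}) : Prop :=
  forall t s, t \in X -> le_tau s t -> s \in X.

Definition L_of (M : {set V}) : {set V} :=
  [set x | [forall w in M, x \notin st w]].

End Graph.

From mathcomp Require Import all_boot.
Set Implicit Arguments. Unset Strict Implicit. Unset Printing Implicit Defensive.

(* Two facts about the preorder <=_tau drive everything: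
   - it is transitive (primes are recovered from prime powers, so the
     "same prime" condition composes), hence a minimal ~_tau class M is
     itself closed downwards: s <= t ~ v forces s <= v, and minimality of
     the class of v gives v <= s, so s ~ v;
   - stars are upward closed along <=_tau: if s <= t and s lies in st(w)
     then t lies in st(w), provided w <> s or G_s is finite.  Indeed s is
     then adjacent to w, so w is in lk(s), contained in st(t); if w = s and
     G_s is finite, st(s) is contained in st(t).
   The second fact says that s <= t with t in L_M can only fail to give
   s in L_M when s is a vertex of M with infinite group.  For a minimal
   class M such an s lies in M anyway, and when all groups are finite this
   exception never occurs; both halves of the theorem follow. *)

Section Tau.
Variables (V : finType) (e : rel V) (o : V -> nat).
Hypothesis sg : simple_graph e.

Lemma in_lk v x : (x \in lk e v) = e v x.
Proof. by rewrite inE. Qed.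

Lemma in_st v x : (x \in st e v) = (x == v) || e v x.
Proof. by rewrite !inE. Qed.

Lemma st_refl v : v \in st e v.
Proof. by rewrite in_st eqxx. Qed.

Lemma st_sym v w : v != w -> (v \in st e w) = (w \in st e v).
Proof.
by case: sg => sym _ nvw; rewrite !in_st (negbTE nvw) eq_sym (negbTE nvw) sym.
Qed.

Lemma prime_power_base_eq p q k l : prime p -> prime q ->
  (1 <= k)%N -> (1 <= l)%N -> p ^ k = q ^ l -> p = q.
Proof.
move=> pp pq; case: k => // k _; case: l => // l _ E.
by rewrite -(pdiv_pfactor k pp) E pdiv_pfactor.
Qed.

Lemma same_prime_trans a b c :
  (exists p k l, [/\ prime p, (1 <= k)%N, (1 <= l)%N,
                     o a = (p ^ k)%N & o b = (p ^ l)%N]) ->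
  (exists p k l, [/\ prime p, (1 <= k)%N, (1 <= l)%N,
                     o b = (p ^ k)%N & o c = (p ^ l)%N]) ->
  exists p k l, [/\ prime p, (1 <= k)%N, (1 <= l)%N,
                    o a = (p ^ k)%N & o c = (p ^ l)%N].
Proof.
move=> [p [k [l [pp k1 l1 oa ob]]]] [q [k' [l' [pq k1' l1' ob' oc]]]].
have epq : p = q by apply: (prime_power_base_eq pp pq l1 k1'); rewrite -ob -ob'.
by subst q; exists p, k, l'.
Qed.

Lemma lk_sub_st v : lk e v \subset st e v.
Proof. by apply/subsetP=> x; rewrite in_lk in_st => ->; rewrite orbT. Qed.

Lemma le_tau_lk_sub v w : le_tau e o v w -> lk e v \subset st e w.
Proof.
case=> [<-|[_ [[_ S]|[_ S]]]] //; first exact: lk_sub_st.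
exact: subset_trans (lk_sub_st v) S.
Qed.

Lemma lk_sub_st_trans a b c : a != c ->
  lk e a \subset st e b -> lk e b \subset st e c -> lk e a \subset st e c.
Proof.
case: sg => sym _ nac Sab Sbc; apply/subsetP=> x ax.
have [xb|nxb] := eqVneq x b; last first.
  apply: (subsetP Sbc); move: (subsetP Sab x ax).
  by rewrite in_st (negbTE nxb) in_lk.
subst x; have [-> //|nbc] := eqVneq b c; first exact: st_refl.
have : a \in st e c by apply: (subsetP Sbc); rewrite in_lk sym -in_lk.
rewrite [a \in _]in_st (negbTE nac) /= => ca.
rewrite st_sym //; apply: (subsetP Sab); by rewrite in_lk sym.
Qed.

Lemma le_tau_trans a b c :
  le_tau e o a b -> le_tau e o b c -> le_tau e o a c.
Proof.
move=> [<-//|[nab Hab]] [<-|[nbc Hbc]]; first by right.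
have [->|nac] := eqVneq a c; first by left.
have Lbc : lk e b \subset st e c by apply: le_tau_lk_sub; right.
right; split; first exact/eqP.
case: Hab => [[oa Sab]|[pab Sab]].
- by left; split=> //; apply: lk_sub_st_trans nac Sab Lbc.
- right; case: Hbc => [[ob _]|[pbc Sbc]].
  + move: pab ob => [p [k [l [pp _ _ _ ->]]]] /eqP.
    by rewrite expn_eq0 eqn0Ngt prime_gt0.
  + by split; [exact: same_prime_trans pab pbc | exact: subset_trans Sab Sbc].
Qed.

Lemma finite_le_tau_st s t : o s != 0 -> le_tau e o s t -> t \in st e s.
Proof.
move=> os [<-|[nst [[os0 _]|[_ S]]]]; first exact: st_refl.
  by rewrite os0 in os.
by rewrite -st_sym; [exact: (subsetP S) _ (st_refl s) | exact/eqP].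
Qed.

Lemma neighbour_le_tau_st s t w : s != w -> s \in st e w ->
  le_tau e o s t -> t \in st e w.
Proof.
move=> nsw sw Hst; have [-> |ntw] := eqVneq t w; first exact: st_refl.
rewrite st_sym //; apply: (subsetP (le_tau_lk_sub Hst)).
by move: sw; rewrite in_st (negbTE nsw) in_lk; case: sg => sym _; rewrite sym.
Qed.

Lemma in_L_ofP (M : {set V}) x :
  reflect (forall w, w \in M -> x \notin st e w) (x \in L_of e M).
Proof. by rewrite inE; apply: (iffP forall_inP). Qed.

Lemma L_of_down (M : {set V}) s t : t \in L_of e M -> le_tau e o s t ->
  (s \in M -> o s != 0) -> s \in L_of e M.
Proof.
move=> /in_L_ofP tL Hst finM; apply/in_L_ofP=> w wM; apply: contraNN (tL w wM).
have [esw _|nsw sw] := eqVneq s w; last exact: neighbour_le_tau_st nsw sw Hst.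
by subst w; exact: finite_le_tau_st (finM wM) Hst.
Qed.

Lemma minimal_class_lower_cone (M : {set V}) :
  minimal_class e o M -> lower_cone e o M.
Proof.
move=> [v [HM Hmin]] t s tM Hst; have [_ tv] := (HM t).1 tM.
have sv := le_tau_trans Hst tv.
by apply/HM; split; [exact: Hmin | exact: sv].
Qed.

End Tau.

Theorem lemma6p8 (V : finType) (v0 : V) (e : rel V) (o : V -> nat) :
  simple_graph e ->
  vertex_orders_ok o ->
  (forall M : {set V}, minimal_class e o M ->
     lower_cone e o (M :|: L_of e M))
  /\
  ((forall v, o v <> 0%N) ->
     forall M : {set V}, lower_cone e o (L_of e M)).
Proof.
move=> sg _; split.
- move=> M minM t s; have coneM := minimal_class_lower_cone sg minM.
  have [sM _ _|nsM] := boolP (s \in M); first by rewrite in_setU sM.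
  rewrite !in_setU => /orP[tM|tL] Hst; first by rewrite (coneM t s tM Hst).
  by rewrite (L_of_down sg tL Hst) ?orbT // => sM; rewrite sM in nsM.
- move=> fin M t s tL Hst; apply: (L_of_down sg tL Hst) => _.
  exact/eqP/fin.
Qed.
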